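(* Let $n$ be odd. The permutation representation of $S_n$ over $\mathbb{C}$ arising from the action of $S_n$ (by $\pi\cdot S=\pi(S)$) on the set of even-sized subsets of $\{1,\dots,n\}$ does not unite conjugacy classes.
   Context: A representation $T$ of $G$ unites conjugacy classes if there are non-conjugate $\sigma,\tau\in G$ with $T(\sigma),T(\tau)$ similar matrices. *)

From mathcomp Require Import all_boot all_order all_algebra all_fingroup all_field.
Set Implicit Arguments. Unset Strict Implicit. Unset Printing Implicit Defensive.
Import GRing.Theory.
Local Open Scope ring_scope.

(* Even-sized subsets of {0,...,n-1} (= {1,...,n} shifted). *)
Definition even_subset (n : nat) := {A : {set 'I_n} | ~~ odd #|A|}.

Definition nev (n : nat) : nat := #|{: even_subset n}|.

Definition permrep (n : nat) (s : 'S_n) : 'M[algC]_(nev n) :=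
  \matrix_(i < nev n, j < nev n)
    ((val (@enum_val (even_subset n) predT i)
      == s @: val (@enum_val (even_subset n) predT j)) %:R).

Definition unites_classes (n : nat) (T : 'S_n -> 'M[algC]_(nev n)) : Prop :=
  exists s t : 'S_n, t \notin (s ^: [set: 'S_n])%g /\ similar_in unitmx (T s) (T t).

From mathcomp Require Import all_boot all_order all_algebra all_fingroup all_solvable all_field.
Set Implicit Arguments. Unset Strict Implicit. Unset Printing Implicit Defensive.
Import GRing.Theory Num.Theory.

(* The trace of the permutation matrix T(s) counts the s-invariant even
   subsets. Invariant subsets are unions of cycles, and for n odd
   complementation exchanges the even and the odd ones, so tr T(s) = 2^(c(s)-1)
   where c(s) is the number of cycles of s. If T(s) and T(t) are similar, then
   so are T(s^k) and T(t^k), hence c(s^k) = c(t^k) for all k. As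
   c(s^k) = sum_(d | k) phi(d) * #{cycles of s of length divisible by d},
   induction on d recovers these numbers, and from them the number of cycles of
   each length: s and t have the same cycle type and are therefore conjugate. *)

Lemma dvdn_mul_divgcd l k j : 0 < l -> (l %| k * j) = (l %/ gcdn l k %| j).
Proof.
move=> l_gt0; set g := gcdn l k.
have g_gt0 : 0 < g by rewrite gcdn_gt0 l_gt0.
have def_l : l = l %/ g * g by rewrite divnK // dvdn_gcdl.
have def_k : k = k %/ g * g by rewrite divnK // dvdn_gcdr.
have cop : coprime (l %/ g) (k %/ g).
  by rewrite /coprime -(eqn_pmul2r g_gt0) mul1n muln_gcdl -def_l -def_k.
rewrite {1}def_l {1}def_k -mulnA [g * j]mulnC mulnA dvdn_pmul2r //.
by rewrite Gauss_dvdr.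
Qed.

Lemma gcdn_sum_totient l k : 0 < k ->
  gcdn l k = \sum_(d < k.+1 | d %| k) (d %| l) * totient d.
Proof.
move=> k_gt0; rewrite -{1}(sum_totient_dvd (gcdn l k)).
have g_lt : gcdn l k < k.+1 by rewrite ltnS dvdn_leq // dvdn_gcdr.
rewrite (big_ord_widen_cond _ (fun d => d %| gcdn l k) totient g_lt).
rewrite [RHS]big_mkcond [LHS]big_mkcond.
apply: eq_bigr => d _ /=; rewrite dvdn_gcd.
case: (boolP (d %| l)) => dl; case: (boolP (d %| k)) => dk //=.
by rewrite mul1n ltnS dvdn_leq // ?dvdn_gcd ?dl ?dk // gcdn_gt0 k_gt0 orbT.
Qed.

Section PermOrbits.
Local Open Scope group_scope.
Variable T : finType.
Implicit Types (s : {perm T}) (x z : T).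

Lemma card_porbit_gt0 s x : 0 < #|porbit s x|.
Proof. by rewrite lt0n card_porbit_neq0. Qed.

Lemma porbit_memE s x z : z \in porbit s x -> porbit s z = porbit s x.
Proof. by rewrite -eq_porbit_mem => /eqP. Qed.

Lemma porbit_step s x : s x \in porbit s x.
Proof. by rewrite -{1}(expg1 s) mem_porbit. Qed.

Lemma porbit_invariant s x : {homo s : z / z \in porbit s x}.
Proof. by move=> z /porbit_memE <-; apply: porbit_step. Qed.

Lemma permX_modporbit s x i : (s ^+ i) x = (s ^+ (i %% #|porbit s x|)) x.
Proof.
set l := #|porbit s x|.
have permXl q : (s ^+ (q * l)) x = x.
  elim: q => [|q IHq]; first by rewrite mul0n expg0 perm1.
  by rewrite mulSn expgD permM [(s ^+ l) x]permX iter_porbit IHq.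
by rewrite {1}(divn_eq i l) expgD permM permXl.
Qed.

Lemma eq_permX_porbit s x i j :
  ((s ^+ i) x == (s ^+ j) x) = (i == j %[mod #|porbit s x|]).
Proof.
apply/eqP/eqP => [eqij|eqij]; last by rewrite permX_modporbit eqij -permX_modporbit.
have lt_mod k : k %% #|porbit s x| < #|porbit s x| by rewrite ltn_mod card_porbit_gt0.
apply/eqP; rewrite -(nth_uniq x _ _ (uniq_traject_porbit s x)) ?size_traject //.
by rewrite !nth_traject // -!permX -!permX_modporbit eqij.
Qed.

Lemma permX_fix_porbit s x i : ((s ^+ i) x == x) = (#|porbit s x| %| i).
Proof. by have := eq_permX_porbit s x i 0; rewrite expg0 perm1 mod0n. Qed.

Lemma card_porbitX s x k :
  #|porbit (s ^+ k) x| = #|porbit s x| %/ gcdn #|porbit s x| k.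
Proof.
apply/eqP; rewrite eqn_dvd; apply/andP; split.
  by rewrite -permX_fix_porbit -expgM permX_fix_porbit dvdn_mul_divgcd ?card_porbit_gt0.
by rewrite -dvdn_mul_divgcd ?card_porbit_gt0 // -permX_fix_porbit expgM permX_fix_porbit.
Qed.

End PermOrbits.

Section InvariantSets.
Variables (T : finType) (s : {perm T}).
Implicit Types (A : {set T}) (x z : T) (P : {set {set T}}).

Lemma invariantP A : reflect {homo s : z / z \in A} (s @: A == A).
Proof.
rewrite eqEcard card_imset ?leqnn ?andbT; last exact: perm_inj.
apply: (iffP subsetP) => sA z; first by move=> zA; apply/sA/imset_f.
by case/imsetP => y yA ->; apply: sA.
Qed.

Lemma porbit_sub_invariant A x : {homo s : z / z \in A} -> x \in A ->
  porbit s x \subset A.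
Proof.
move=> sA xA; apply/subsetP => _ /porbitP [i ->].
elim: i => [|i IHi]; first by rewrite expg0 perm1.
by rewrite expgSr permM sA.
Qed.

Lemma porbits_cover_invariant P : P \subset porbits s -> s @: cover P == cover P.
Proof.
move=> sP; apply/invariantP => z /bigcupP [O OP zO]; apply/bigcupP; exists O => //.
have /imsetP [x _ eO] := subsetP sP O OP; rewrite eO in zO *.
exact: porbit_invariant.
Qed.

Lemma porbits_sub_cover P O : P \subset porbits s -> O \in porbits s ->
  O \subset cover P -> O \in P.
Proof.
move=> sP /imsetP [x _ ->] /subsetP /(_ x (porbit_id s x)) /bigcupP [O' O'P xO'].
have /imsetP [y _ eO'] := subsetP sP O' O'P.
by rewrite eO' in xO' O'P; rewrite (porbit_memE xO').
Qed.

Lemma card_invariant : #|[set A : {set T} | s @: A == A]| = 2 ^ #|porbits s|.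
Proof.
have coverK : {in powerset (porbits s),
    cancel cover (fun A => [set O in porbits s | O \subset A])}.
  move=> P; rewrite inE => sP /=; apply/setP => O; rewrite inE.
  apply/andP/idP => [[]|OP]; first exact: porbits_sub_cover.
  by rewrite (subsetP sP) // (bigcup_sup O OP).
rewrite -card_powerset -(card_in_imset (can_in_inj coverK)); congr #|pred_of_set _|.
apply/setP => A; rewrite inE; apply/idP/imsetP => [sA|[P]].
  exists [set O in porbits s | O \subset A].
    by rewrite inE; apply/subsetP => O; rewrite inE => /andP [].
  apply/setP => z; apply/idP/bigcupP => [zA|[O]]; last first.
    by rewrite inE => /andP [_ /subsetP]; apply.
  exists (porbit s z); rewrite ?porbit_id // inE imset_f //=.
  exact/porbit_sub_invariant/zA/invariantP.
by rewrite inE => sP ->; apply: porbits_cover_invariant.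
Qed.

Lemma invariantC A : (s @: (~: A) == ~: A) = (s @: A == A).
Proof.
suff sC (B : {set T}) : s @: B == B -> s @: (~: B) == ~: B.
  by apply/idP/idP => /sC; rewrite ?setCK.
move=> /eqP sB; apply/invariantP => z; rewrite !inE; apply: contra.
by rewrite -{1}sB => /imsetP [w wB /perm_inj ->].
Qed.

Lemma card_even_invariant : odd #|T| ->
  #|[set A : {set T} | ~~ odd #|A| && (s @: A == A)]| * 2 = 2 ^ #|porbits s|.
Proof.
move=> oddT; rewrite -card_invariant muln2 -addnn.
have oddC A : odd #|~: A| = ~~ odd #|A|.
  by move: oddT; rewrite -(cardsC A) oddD; case: (odd _); case: (odd _).
rewrite -(cardsID [set A : {set T} | odd #|A|] [set A : {set T} | s @: A == A]) addnC.
congr (_ + _); first by apply: eq_card => A; rewrite !inE andbC.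
rewrite -(card_imset _ (@setC_inj T)); apply: eq_card => A; rewrite !inE.
apply/imsetP/idP => [[B] | odd_invA].
  by rewrite inE => /andP [evenB invB] ->; rewrite invariantC invB oddC evenB.
by exists (~: A); rewrite ?setCK // inE invariantC oddC negbK andbC.
Qed.

End InvariantSets.

Section Intertwining.
Local Open Scope group_scope.
Variable T : finType.
Implicit Types (s t : {perm T}) (x y z : T) (A B : {set T}).

Definition intertwining s t A B (f : T -> T) :=
  [/\ {in A &, injective f}, f @: A = B & {in A, forall z, f (s z) = t (f z)}].

Lemma intertwining_porbit s t x y : #|porbit s x| = #|porbit t y| ->
  exists f, intertwining s t (porbit s x) (porbit t y) f.
Proof.
move=> eq_l; set l := #|porbit s x|.
pose f z := (t ^+ index z (traject s x l)) y.
have fX i : f ((s ^+ i) x) = (t ^+ i) y.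
  have sXi : (s ^+ i) x \in traject s x l by rewrite -porbit_traject mem_porbit.
  have idx_lt : index ((s ^+ i) x) (traject s x l) < l.
    by rewrite -[X in _ < X](size_traject s x) index_mem.
  apply/eqP; rewrite eq_permX_porbit -eq_l -/l -eq_permX_porbit.
  by rewrite permX -(nth_traject s idx_lt x) nth_index.
exists f; split.
- move=> _ _ /porbitP [i ->] /porbitP [j ->]; rewrite !fX => /eqP.
  by rewrite eq_permX_porbit -eq_l -eq_permX_porbit => /eqP.
- apply/setP => z; apply/imsetP/porbitP => [[_ /porbitP [i ->] ->]|[i ->]].
    by exists i; rewrite fX.
  by exists ((s ^+ i) x); rewrite ?mem_porbit ?fX.
- by move=> _ /porbitP [i ->]; rewrite -permM -expgSr !fX expgSr permM.
Qed.

Lemma intertwiningU s t A1 A2 B1 B2 f1 f2 :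
  [disjoint A1 & A2] -> [disjoint B1 & B2] ->
  {homo s : z / z \in A1} -> {homo s : z / z \in A2} ->
  intertwining s t A1 B1 f1 -> intertwining s t A2 B2 f2 ->
  intertwining s t (A1 :|: A2) (B1 :|: B2) (fun z => if z \in A1 then f1 z else f2 z).
Proof.
move=> dA dB sA1 sA2 [inj1 im1 com1] [inj2 im2 com2].
have f1A z : z \in A1 -> f1 z \in B1 by move=> zA; rewrite -im1 imset_f.
have f2A z : z \in A2 -> f2 z \in B2 by move=> zA; rewrite -im2 imset_f.
have notA1 z : z \in A2 -> z \notin A1.
  by move=> zA2; apply: contraTN dA => zA1; apply/pred0Pn; exists z; rewrite /= zA1.
have notB1 z : z \in B2 -> z \notin B1.
  by move=> zB2; apply: contraTN dB => zB1; apply/pred0Pn; exists z; rewrite /= zB1.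
split.
- move=> z w; rewrite !inE.
  case: (boolP (z \in A1)) => zA1; case: (boolP (w \in A1)) => wA1 //=.
  + by move=> _ _; apply: inj1.
  + by move=> _ wA2 eqf; have := notB1 _ (f2A _ wA2); rewrite -eqf f1A.
  + by move=> zA2 _ eqf; have := notB1 _ (f2A _ zA2); rewrite eqf f1A.
  + by apply: inj2.
- by rewrite imsetU -im1 -im2; congr (_ :|: _); apply: eq_in_imset => z zA;
     rewrite ?zA // (negPf (notA1 _ zA)).
- move=> z; rewrite inE; case: (boolP (z \in A1)) => [zA1 _|_ /= zA2].
    by rewrite sA1 // com1.
  by rewrite (negPf (notA1 _ (sA2 _ zA2))) com2.
Qed.

Definition cycle_points s A l := #|[set z in A | #|porbit s z| == l]|.

Lemma cycle_pointsD_porbit s A x l : {homo s : z / z \in A} -> x \in A ->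
  cycle_points s A l =
  cycle_points s (A :\: porbit s x) l + (#|porbit s x| == l) * #|porbit s x|.
Proof.
move=> sA xA; rewrite /cycle_points -(cardsID (porbit s x)) addnC; congr (_ + _).
  by apply: eq_card => z; rewrite !inE andbA andbAC.
have sOA := porbit_sub_invariant sA xA.
have -> : [set z in A | #|porbit s z| == l] :&: porbit s x =
          if #|porbit s x| == l then porbit s x else set0.
  apply/setP => z; rewrite !inE; case: (boolP (z \in porbit s x)) => [zO|zO'].
    by rewrite (porbit_memE zO) (subsetP sOA) // andbT; case: ifP; rewrite ?inE.
  by rewrite andbF; case: ifP; rewrite ?inE ?(negPf zO').
by case: ifP => _; rewrite ?cards0 /= ?mul1n.
Qed.

Lemma invariantD_porbit s A x : {homo s : z / z \in A} ->
  {homo s : z / z \in A :\: porbit s x}.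
Proof.
move=> sA z; rewrite !inE => /andP [zO zA]; rewrite sA // andbT.
by apply: contra zO => /porbit_memE <-; rewrite porbit_sym porbit_step.
Qed.

Lemma intertwining_cycle_points s t A B :
  {homo s : z / z \in A} -> {homo t : z / z \in B} ->
  (forall l, cycle_points s A l = cycle_points t B l) ->
  exists f, intertwining s t A B f.
Proof.
have [m] := ubnP #|A|; elim: m A B => // m IHm A B cardA sA tB eq_cp.
have [A0 | [x xA]] := set_0Vmem A.
  have B0 : B = set0.
    apply/setP => y; rewrite inE; apply/negbTE/negP => yB.
    have : cycle_points t B #|porbit t y| = 0.
      rewrite -eq_cp A0; apply/eqP; rewrite cards_eq0.
      by apply/eqP/setP => z; rewrite !inE.
    by move/eqP; rewrite cards_eq0 => /eqP/setP/(_ y); rewrite !inE yB eqxx.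
  by exists id; rewrite A0 B0; split; rewrite ?imset0 // => ?; rewrite inE.
set O := porbit s x; have sOA : O \subset A := porbit_sub_invariant sA xA.
have [y yB eq_l] : exists2 y, y \in B & #|O| = #|porbit t y|.
  have : 0 < cycle_points t B #|O|.
    by rewrite -eq_cp card_gt0; apply/set0Pn; exists x; rewrite !inE xA eqxx.
  by rewrite card_gt0 => /set0Pn [y]; rewrite inE => /andP [yB /eqP]; exists y.
set O' := porbit t y; have sOB : O' \subset B := porbit_sub_invariant tB yB.
have [g intg] := intertwining_porbit eq_l.
have [h inth] : exists h, intertwining s t (A :\: O) (B :\: O') h.
  apply: IHm.
  - rewrite -ltnS; apply: leq_trans cardA; rewrite ltnS; apply: proper_card.
    by apply/properP; split; [exact: subsetDl | exists x; rewrite // inE porbit_id].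
  - exact: invariantD_porbit.
  - exact: invariantD_porbit.
  - move=> l; have := eq_cp l.
    rewrite (cycle_pointsD_porbit _ sA xA) (cycle_pointsD_porbit _ tB yB).
    by rewrite -/O -/O' -eq_l => /addIn.
rewrite -(setID A O) -(setID B O') (setIidPr sOA) (setIidPr sOB).
exists (fun z => if z \in O then g z else h z).
apply: intertwiningU => //; [| |exact: porbit_invariant|exact: invariantD_porbit].
  by rewrite disjoint_subset; apply/subsetP => z zO; rewrite !inE zO.
by rewrite disjoint_subset; apply/subsetP => z zO; rewrite !inE zO.
Qed.

Lemma conj_perm_cycle_points s t :
  (forall l, cycle_points s setT l = cycle_points t setT l) ->
  t \in s ^: [set: {perm T}].
Proof.
move=> eq_cp.
have invT (u : {perm T}) : {homo u : z / z \in setT} by move=> z; rewrite inE.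
have [f [injf _ comf]] := intertwining_cycle_points (invT s) (invT t) eq_cp.
have {}injf : injective f by move=> z w; apply: injf; rewrite inE.
apply/imsetP; exists (perm injf); rewrite ?inE //.
apply/permP => z; rewrite conjgE !permM -{1}(permKV (perm injf) z) permE.
by rewrite -comf ?inE // permE.
Qed.

End Intertwining.

Section CycleCounting.
Local Open Scope ring_scope.
Variable T : finType.
Implicit Types (s t : {perm T}) (x : T).

Lemma card_porbits_sum s : (#|porbits s|%:R : rat) = \sum_x (#|porbit s x|%:R)^-1.
Proof.
rewrite (partition_big_imset (porbit s)) -sumr_const.
apply: eq_bigr => _ /imsetP [x _ ->].
rewrite (eq_bigl (mem (porbit s x))) => [|z]; last by rewrite /= eq_porbit_mem.
rewrite (eq_bigr (fun _ => (#|porbit s x|%:R)^-1)) => [|z /porbit_memE ->] //.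
by rewrite sumr_const -[_ *+ #|_|]mulr_natr mulVf // pnatr_eq0 -lt0n card_porbit_gt0.
Qed.

(* The number of cycles of s whose length is divisible by d: a cycle of length
   l contributes l points of weight 1/l. *)
Definition ncycles_dvd s d : rat :=
  \sum_x (d %| #|porbit s x|)%N%:R / #|porbit s x|%:R.

Lemma card_porbitsX s k : (0 < k)%N ->
  (#|porbits (s ^+ k)%g|%:R : rat) =
  \sum_(d < k.+1 | (d %| k)%N) (totient d)%:R * ncycles_dvd s d.
Proof.
move=> k_gt0; rewrite card_porbits_sum.
under eq_bigr => x _ do
  rewrite card_porbitX natf_div ?dvdn_gcdl // invf_div gcdn_sum_totient //.
under [RHS]eq_bigr => d _ do rewrite mulr_sumr.
rewrite exchange_big /=; apply: eq_bigr => x _.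
rewrite natr_sum mulr_suml; apply: eq_bigr => d _.
by rewrite natrM mulrA [_ * (totient _)%:R]mulrC.
Qed.

Lemma eq_ncycles_dvd s t :
  (forall k, (0 < k)%N -> #|porbits (s ^+ k)%g| = #|porbits (t ^+ k)%g|) ->
  forall d, (0 < d)%N -> ncycles_dvd s d = ncycles_dvd t d.
Proof.
move=> eq_c; elim/ltn_ind => d IHd d_gt0.
have := congr1 (fun n : nat => n%:R : rat) (eq_c d d_gt0) => /=.
rewrite !card_porbitsX // big_mkcond [RHS]big_mkcond !big_ord_recr /= dvdnn.
rewrite (eq_bigr (fun i : 'I_d => if (i %| d)%N
    then (totient i)%:R * ncycles_dvd t i else 0)) => [|i _]; last first.
  case: ifP => //= i_dvd; rewrite IHd //.
  by rewrite lt0n; apply: contraTneq i_dvd => ->; rewrite dvd0n -lt0n d_gt0.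
by move/addrI/mulfI; apply; rewrite pnatr_eq0 -lt0n totient_gt0.
Qed.

Lemma ncycles_dvd_cycle_points s d : (0 < d)%N ->
  ncycles_dvd s d =
  \sum_(m < #|T|.+1 | (d %| m)%N) (cycle_points s setT m)%:R / m%:R.
Proof.
move=> d_gt0; rewrite /ncycles_dvd.
rewrite (eq_bigr (fun x =>
    if (d %| #|porbit s x|)%N then (#|porbit s x|%:R)^-1 else 0)) => [|x _];
  last by case: ifP; rewrite ?mul1r ?mul0r.
rewrite -big_mkcond /=.
have lt_porbit x : (#|porbit s x| < #|T|.+1)%N by rewrite ltnS max_card.
rewrite (partition_big (fun x => inord #|porbit s x| : 'I_#|T|.+1)
           (fun m : 'I_#|T|.+1 => (d %| m)%N)) => [|x]; last by rewrite /= inordK.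
apply: eq_bigr => m d_m.
rewrite (eq_bigl (fun x => #|porbit s x| == m)) => [|x]; last first.
  by rewrite -val_eqE /= inordK //; case: eqP => [->|]; rewrite ?d_m ?andbF.
rewrite (eq_bigr (fun _ => (m%:R)^-1)) => [|x /eqP ->] //.
rewrite sumr_const mulrC mulr_natr; congr (_ *+ _).
by apply: eq_card => x; rewrite !inE.
Qed.

Lemma cycle_points0 s A : cycle_points s A 0 = 0%N.
Proof.
apply/eqP; rewrite cards_eq0; apply/eqP/setP => x.
by rewrite !inE eqn0Ngt card_porbit_gt0 andbF.
Qed.

Lemma cycle_points_gt s A l : (#|T| < l)%N -> cycle_points s A l = 0%N.
Proof.
move=> lt_l; apply/eqP; rewrite cards_eq0; apply/eqP/setP => x; rewrite !inE.
by rewrite ltn_eqF ?andbF // (leq_ltn_trans (max_card _) lt_l).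
Qed.

Lemma eq_cycle_points s t :
  (forall d, (0 < d)%N -> ncycles_dvd s d = ncycles_dvd t d) ->
  forall l, cycle_points s setT l = cycle_points t setT l.
Proof.
move=> eq_nc l; have [i] := ubnP (#|T|.+1 - l)%N; elim: i l => // i IHi l lt_i.
have [->|l_gt0] := posnP l; first by rewrite !cycle_points0.
have [lt_l|le_l] := ltnP #|T| l; first by rewrite !cycle_points_gt.
have lt_lT : (l < #|T|.+1)%N by rewrite ltnS.
have := eq_nc l l_gt0; rewrite !ncycles_dvd_cycle_points //.
rewrite (bigD1 (Ordinal lt_lT)) ?dvdnn // [RHS](bigD1 (Ordinal lt_lT)) ?dvdnn //=.
rewrite (eq_bigr (fun m : 'I_#|T|.+1 => (cycle_points t setT m)%:R / m%:R)).
  move/addIr/(mulIf _)/eqP; rewrite eqr_nat invr_eq0 pnatr_eq0 -lt0n.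
  by move=> /(_ l_gt0)/eqP.
move=> m /andP [l_dvd_m m_neq_l].
have [->|m_gt0] := posnP m; first by rewrite !invr0 !mulr0.
have lt_lm : (l < m)%N.
  rewrite ltn_neqAle dvdn_leq // andbT.
  by apply: contra m_neq_l => /eqP eq_lm; apply/eqP/val_inj.
rewrite IHi //; apply: leq_ltn_trans (leq_sub2l _ lt_lm) _.
by rewrite subSS -ltnS -subSn.
Qed.

End CycleCounting.

Local Open Scope ring_scope.

Lemma mxtrace_conjX (F : fieldType) n (P A : 'M[F]_n) k : P \in unitmx ->
  \tr ((P *m A *m invmx P) ^+ k) = \tr (A ^+ k).
Proof.
move=> P_unit; have -> : (P *m A *m invmx P) ^+ k = P *m A ^+ k *m invmx P.
  elim: k => [|k IHk]; first by rewrite !expr0 mulmx1 mulmxV.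
  by rewrite !exprS IHk -!mulmxE !mulmxA mulmxKV.
by rewrite mxtrace_mulC mulmxA mulVmx // mul1mx.
Qed.

Section PermRep.
Variable n : nat.
Local Notation E := (even_subset n).
Local Notation V i := (val (@enum_val E predT i)).

Lemma even_subset_imset (s : 'S_n) (A : {set 'I_n}) : ~~ odd #|A| -> ~~ odd #|s @: A|.
Proof. by rewrite card_imset //; apply: perm_inj. Qed.

Lemma permrepM (s t : 'S_n) : permrep s *m permrep t = permrep (t * s)%g.
Proof.
apply/matrixP => i j; rewrite !mxE.
pose S : E := exist _ (t @: V j) (even_subset_imset t (valP (enum_val j))).
rewrite (bigD1 (enum_rank S)) //= !mxE enum_rankK /= eqxx mulr1 big1 ?addr0.
  by rewrite -imset_comp; congr ((_ == _)%:R); apply: eq_imset => x; rewrite permM.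
move=> k neq_k; rewrite !mxE.
case: (boolP (V k == t @: V j)) => [/eqP eq_Vk|_]; last by rewrite mulr0.
by case/eqP: neq_k; apply: (canRL enum_valK); apply: val_inj.
Qed.

Lemma permrep1 : permrep (1%g : 'S_n) = 1%:M.
Proof.
apply/matrixP => i j; rewrite !mxE.
rewrite (eq_imset (g := id)) => [|x]; last by rewrite perm1.
by rewrite imset_id (inj_eq val_inj) (inj_eq enum_val_inj).
Qed.

Lemma permrepX (s : 'S_n) k : permrep s ^+ k = permrep (s ^+ k)%g.
Proof.
elim: k => [|k IHk]; first by rewrite expr0 expg0 permrep1.
by rewrite exprS IHk -mulmxE permrepM -expgSr.
Qed.

Lemma mxtrace_permrep (s : 'S_n) :
  \tr (permrep s) = #|[set A : {set 'I_n} | ~~ odd #|A| && (s @: A == A)]|%:R.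
Proof.
have -> : \tr (permrep s) = \sum_(S : E) (val S == s @: val S)%:R.
  rewrite (big_enum_val_cond (A := predT) xpredT
    (fun S : E => (val S == s @: val S)%:R)).
  by apply: eq_bigr => i _; rewrite mxE.
rewrite -natr_sum; congr _%:R.
rewrite (eq_bigr (fun S : E => if val S == s @: val S then 1%N else 0%N)) => [|S _];
  last by case: eqP.
rewrite -big_mkcond sum1dep_card -(card_imset _ val_inj); apply: eq_card => A.
rewrite !inE; apply/imsetP/andP => [[S] | [evenA /eqP invA]].
  by rewrite inE => /eqP invS ->; rewrite (valP S) -invS.
by exists (exist _ A evenA : E); rewrite // inE /= invA.
Qed.

End PermRep.

Theorem theorem3p9 (n : nat) : odd n -> ~ unites_classes (@permrep n).
Proof.
move=> odd_n [s [t [not_conj [P P_unit /(similarRL P_unit) def_t]]]].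
have eq_tr k : \tr (permrep (s ^+ k)%g) = \tr (permrep (t ^+ k)%g).
  by rewrite -!permrepX def_t mxtrace_conjX.
have eq_porbits k : #|porbits (s ^+ k)%g| = #|porbits (t ^+ k)%g|.
  have oddT : odd #|'I_n| by rewrite card_ord.
  apply/eqP; rewrite -(@eqn_exp2l 2) // -!(card_even_invariant _ oddT) eqn_mul2r /=.
  by rewrite -(eqr_nat algC) -!mxtrace_permrep eq_tr.
apply: (negP not_conj); apply: conj_perm_cycle_points; apply: eq_cycle_points.
exact: eq_ncycles_dvd.
Qed.
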